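(* Let $n\ge 2$ and let $\sigma$ be a uniformly random permutation of $E(G_n)$. Then the probability that there are distinct vertices $w_1,w_2\in W_B=E(G_n)$ with $N_{B(G_n,\sigma)}^{2}(w_1)=N_{B(G_n,\sigma)}^{2}(w_2)$ is in $\mathcal{O}\left(\frac{1}{n}\right)$ as $n\to\infty$.
   Context: $G_n$ is the graph with vertex set $\{1,\dots,2n\}$ and edge set $\{\{i,i+1\}: 1\le i\le 2n-1\}\cup\{\{2n,1\}\}\cup\{\{i,i+n\}: 1\le i\le n\}$. For a permutation $\sigma$ of $E(G_n)$, $B(G_n,\sigma)$ is the bipartite graph with parts $V_B=V(G_n)\times\{0,1\}$ and $W_B=E(G_n)$ and edge set $\{\{(v,0),e\}: v\in e\}\cup\{\{(v,1),e\}: v\in\sigma(e)\}$. For a graph $H$ and vertex $v$, the second neighbourhood is $N_H^{2}(v)=\{u\in V(H): u\neq v \text{ and there is } w \text{ with } \{v,w\},\{w,u\}\in E(H)\}$. *)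

From HB Require Import structures.
From mathcomp Require Import all_boot all_order all_fingroup all_algebra.
Set Implicit Arguments. Unset Strict Implicit. Unset Printing Implicit Defensive.
Import Order.TTheory GRing.Theory Num.Theory.

(* Vertices 1..2n of the paper are represented by 'I_(2n), vertex k <-> k-1. *)
Definition vtx (n : nat) := 'I_(2 * n).

(* Adjacency generating the edges of G_n (0-indexed):
   {i, i+1 mod 2n}  (the cycle, including {2n-1, 0} i.e. paper's {2n,1}),
   {i, i+n} for i < n  (the chords). *)
Definition gen_pair (n : nat) (i j : vtx n) : bool :=
  (val j == (val i).+1 %% (2 * n)) || ((val i < n) && (val j == val i + n)).

Definition Gedges (n : nat) : {set {set vtx n}} :=
  [set e : {set vtx n} | [exists i : vtx n, exists j : vtx n,
                            gen_pair i j && (e == [set i; j])]].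

Definition Edge (n : nat) := {e : {set vtx n} | e \in Gedges n}.

(* Vertex type of B(G_n, sigma): (V x {0,1}) + E, with bool false = 0, true = 1. *)
Definition BVtx (n : nat) := ((vtx n * bool) + Edge n)%type.

Definition Badj (n : nat) (s : {perm Edge n}) : rel (BVtx n) :=
  fun x y =>
    match x, y with
    | inl (v, b), inr e | inr e, inl (v, b) =>
        if b then v \in val (s e) else v \in val e
    | _, _ => false
    end.

Definition N2 (T : finType) (r : rel T) (v : T) : {set T} :=
  [set u | (u != v) && [exists w, r v w && r w u]].

Definition bad_perm (n : nat) (s : {perm Edge n}) : bool :=
  [exists w1 : Edge n, exists w2 : Edge n,
     (w1 != w2) && (N2 (Badj s) (inr w1) == N2 (Badj s) (inr w2))].

Definition prob_bad (n : nat) : rat :=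
  (#|[set s : {perm Edge n} | bad_perm s]|%:R / #|{perm Edge n}|%:R)%R.

From mathcomp Require Import all_boot all_order all_fingroup all_algebra.
From mathcomp Require Import zify ring unstable.
Import Order.TTheory GRing.Theory Num.Theory.
Set Implicit Arguments. Unset Strict Implicit. Unset Printing Implicit Defensive.

(* If N²(w1) = N²(w2) in B(G_n, σ) for distinct edges w1, w2, then w1 and w2 are
   disjoint, and every edge d ≠ w1 meeting w1 but not w2 is a second neighbour of w1
   through V × {0} only; so it must be one of w2 through V × {1}, i.e. σ(d) meets
   σ(w2).  G_n is cubic and triangle-free, so there are at least two such d, and four
   unless some edge meets both w1 and w2.  Each edge meets only 5 edges, so once σ(w2)
   is chosen each σ(d) has at most 5 values.  Summing over the at most 25·|E| pairs
   joined by an edge and the |E|² other pairs gives O(1/|E|) = O(1/n), as |E| = 3n. *)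

Section Counting.
Variable T : finType.

Lemma sum_nat_constT c : \sum_(x : T) c = #|T| * c.
Proof. by rewrite sum_nat_const (eq_card (B := T)). Qed.

Lemma sum_mem_card (A : {pred T}) : \sum_(x : T) (x \in A : nat) = #|A|.
Proof. by rewrite -sum1_card [RHS]big_mkcond; apply: eq_bigr => x _; case: (x \in A). Qed.

Lemma card_permT : #|{perm T}| = #|T|`!.
Proof.
rewrite -cardsT -card_perm; apply: eq_card => s; rewrite !inE.
by apply/esym/subsetP => x _; rewrite inE.
Qed.

Lemma card_perm_eq_on (X : {set T}) (g : T -> T) :
  #|[set s : {perm T} | [forall x in X, s x == g x]]| <= (#|T| - #|X|)`!.
Proof.
set S := [set s : {perm T} | _].
(* [s |-> s * s0^-1] injects [S] into the permutations fixing [X] pointwise. *)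
have [->|[s0 S_s0]] := set_0Vmem S; first by rewrite cards0.
have -> : #|T| - #|X| = #|~: X| by rewrite -(cardsC X) addKn.
rewrite -card_perm -(card_in_imset (f := fun s => s * s0^-1)%g); last first.
  by move=> s t _ _; apply: mulIg.
apply/subset_leq_card/subsetP => _ /imsetP[s S_s ->].
apply/subsetP => x; rewrite !inE; apply: contraR => /negbNE Xx.
move: S_s S_s0; rewrite !inE => /forall_inP/(_ x Xx)/eqP sx /forall_inP/(_ x Xx)/eqP s0x.
by rewrite permM sx -s0x permK.
Qed.

Lemma card_perm_in_on (X : {set T}) (A : T -> {set T}) K :
  {in X, forall x, #|A x| <= K} ->
  #|[set s : {perm T} | [forall x in X, s x \in A x]]| <= K ^ #|X| * (#|T| - #|X|)`!.
Proof.
move=> leAK.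
(* Off [X] the value is pinned, so [family F] has [\prod_(x in X) #|A x|] elements. *)
pose F x := if x \in X then A x else [set x].
pose agree (g : {ffun T -> T}) := [set s : {perm T} | [forall x in X, s x == g x]].
have sub : [set s : {perm T} | [forall x in X, s x \in A x]] \subset
           \bigcup_(g in family F) agree g.
  apply/subsetP => s; rewrite inE => /forall_inP sA.
  apply/bigcupP; exists [ffun x => if x \in X then s x else x].
    by apply/familyP => x; rewrite ffunE /F; case: ifP => [/sA|]; rewrite ?inE.
  by rewrite inE; apply/forall_inP => x Xx; rewrite ffunE Xx.
apply: leq_trans (subset_leq_card sub) _; apply: leq_trans (card_big_setU _ _ _) _.
apply: (@leq_trans (\sum_(g in family F) (#|T| - #|X|)`!)).
  by apply: leq_sum => g _; apply: card_perm_eq_on.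
rewrite sum_nat_const leq_mul2r; apply/orP; right.
rewrite card_family foldrE big_image /= (bigID (mem X)) /=.
rewrite [X in _ * X <= _]big1 ?muln1 => [|x /negbTE Xx]; last by rewrite /F Xx cards1.
by rewrite -prod_nat_const; apply: leq_prod => x Xx; rewrite /F Xx; apply: leAK.
Qed.

End Counting.

(* Adjacency of G_n on the labels 0, ..., 2n-1, written without [%%] so that [lia]
   decides it. *)
Definition adjn (n i j : nat) : bool :=
  [|| j == i.+1, (i.+1 == 2 * n) && (j == 0), i == j.+1,
      (j.+1 == 2 * n) && (i == 0), j == i + n | i == j + n].

Section Graph.
Variable n : nat.
Implicit Types (e f w : Edge n) (a x : vtx n).

Lemma adjn_sym i j : adjn n i j = adjn n j i.
Proof. by apply/idP/idP; rewrite /adjn; lia. Qed.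

Lemma gen_pair_adjn (i j : vtx n) : gen_pair i j -> adjn n i j.
Proof.
rewrite /gen_pair /=; have := ltn_ord i; rewrite /adjn.
case: (ltngtP i.+1 (2 * n)) => [i_lt|//|->] _; first by rewrite modn_small //; lia.
by rewrite modnn; lia.
Qed.

Lemma Edge_pair e : exists i j : vtx n, adjn n i j /\ val e = [set i; j].
Proof.
have := valP e; rewrite inE => /existsP[i /existsP[j /andP[ij /eqP->]]].
by exists i, j; rewrite gen_pair_adjn.
Qed.

Lemma edge_at a e : a \in val e -> exists x, adjn n a x /\ val e = [set a; x].
Proof.
have [i [j [ij ->]]] := Edge_pair e; rewrite !inE => /orP[]/eqP->.
  by exists j.
by exists i; rewrite adjn_sym setUC.
Qed.

Definition nbrs a : {set vtx n} := [set x : vtx n | adjn n a x].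

Definition edges_at a : {set Edge n} := [set e : Edge n | a \in val e].

Definition meets e f : bool := val e :&: val f != set0.

Definition meeting e : {set Edge n} := [set f : Edge n | meets e f].

Definition near w1 w2 : bool := [exists u : Edge n, meets w1 u && meets u w2].

Lemma meetsC e f : meets e f = meets f e.
Proof. by rewrite /meets setIC. Qed.

Lemma meetss e : meets e e.
Proof.
have [i [j [_ eij]]] := Edge_pair e.
by rewrite /meets setIid; apply/set0Pn; exists i; rewrite eij !inE eqxx.
Qed.

Lemma meetsE e f i j : val e = [set i; j] -> meets e f = (i \in val f) || (j \in val f).
Proof.
move=> eij; apply/set0Pn/orP => [[v]|[fi|fj]]; rewrite ?inE ?eij.
- by rewrite !inE => /andP[/orP[]/eqP-> ->]; [left|right].
- by exists i; rewrite !inE eqxx.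
- by exists j; rewrite !inE eqxx orbT.
Qed.

Lemma meeting_pair e i j : val e = [set i; j] -> meeting e = edges_at i :|: edges_at j.
Proof. by move=> eij; apply/setP => f; rewrite !inE (meetsE _ eij). Qed.

Hypothesis n_ge3 : 3 <= n.

Lemma adjnn i : adjn n i i = false.
Proof. by apply/negbTE; rewrite /adjn; lia. Qed.

Lemma adjn_triangle i j k : adjn n i j -> adjn n i k -> adjn n j k -> False.
Proof. rewrite /adjn; lia. Qed.

Lemma adjn_Gedges (i j : vtx n) : adjn n i j -> [set i; j] \in Gedges n.
Proof.
move=> ij; rewrite inE.
have i_lt := ltn_ord i; have j_lt := ltn_ord j.
have mod_succ k : k < 2 * n -> k.+1 %% (2 * n) = if k.+1 == 2 * n then 0 else k.+1.
  by move=> k_lt; case: eqP => [->|ne]; [rewrite modnn | rewrite modn_small //; lia].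
have /orP[gij|gji] : gen_pair i j || gen_pair j i.
  move: ij; rewrite /gen_pair /= !mod_succ //; rewrite /adjn; case: ifP; case: ifP; lia.
- by apply/existsP; exists i; apply/existsP; exists j; rewrite gij eqxx.
- by apply/existsP; exists j; apply/existsP; exists i; rewrite gji setUC eqxx.
Qed.

Lemma card_nbrs a : #|nbrs a| = 3.
Proof.
have a_lt := ltn_ord a.
pose l := [:: if a.+1 == 2 * n then 0 else a.+1;
              if a == 0 :> nat then (2 * n).-1 else a.-1;
              if a < n then a + n else a - n].
suff : perm_eq [seq nat_of_ord x | x <- enum (nbrs a)] l.
  by move/perm_size; rewrite size_map -cardE.
apply: uniq_perm; first by rewrite map_inj_uniq ?enum_uniq //; apply: val_inj.
  by rewrite /= !inE; case: ifP; case: ifP; case: ifP; lia.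
move=> v; apply/mapP/idP => [[x] | v_l].
  rewrite mem_enum inE => ax ->; have := ltn_ord x; move: ax.
  by rewrite /adjn !inE; case: ifP; case: ifP; case: ifP; lia.
have v_lt : v < 2 * n by move: v_l; rewrite !inE; case: ifP; case: ifP; case: ifP; lia.
exists (Ordinal v_lt); rewrite // mem_enum inE /adjn /=.
by move: v_l; rewrite !inE; case: ifP; case: ifP; case: ifP; lia.
Qed.

Lemma card_edges_at a : #|edges_at a| = 3.
Proof.
rewrite -(card_imset _ val_inj) -(card_nbrs a).
have -> : val @: edges_at a = [set [set a; x] | x in nbrs a].
  apply/setP => E; apply/imsetP/imsetP => [[e] | [x]].
    by rewrite inE => /edge_at[x [ax ->]] ->; exists x; rewrite ?inE.
  rewrite inE => ax ->; exists (Sub [set a; x] (adjn_Gedges ax)) => //.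
  by rewrite inE SubK !inE eqxx.
apply: card_in_imset => x y; rewrite !inE => ax _ /setP/(_ x).
rewrite !inE eqxx orbT => /esym/orP[/eqP xa|/eqP //].
by rewrite xa adjnn in ax.
Qed.

Lemma card_Edge : #|{: Edge n}| = 3 * n.
Proof.
have card_val e : #|val e| = 2.
  by have [i [j [ij ->]]] := Edge_pair e; rewrite cards2; case: eqP ij => // ->; rewrite adjnn.
have : \sum_(a : vtx n) \sum_(e : Edge n) (a \in val e : nat) =
       \sum_(e : Edge n) \sum_(a : vtx n) (a \in val e : nat) by rewrite exchange_big.
rewrite (eq_bigr (fun _ => 3)) => [|a _]; last first.
  by rewrite -(card_edges_at a) -sum_mem_card; apply: eq_bigr => e _; rewrite inE.
rewrite [RHS](eq_bigr (fun _ => 2)) => [|e _]; last by rewrite sum_mem_card card_val.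
rewrite !sum_nat_constT card_ord => h; apply/eqP.
by rewrite -(eqn_pmul2r (isT : 0 < 2)) -h; apply/eqP; lia.
Qed.

Lemma edges_atI e (i j : vtx n) : adjn n i j -> val e = [set i; j] ->
  edges_at i :&: edges_at j = [set e].
Proof.
move=> ij eij; apply/setP => f; rewrite !inE.
apply/andP/eqP => [[/edge_at[x [ix fx]]] | ->]; last by rewrite eij !inE !eqxx orbT.
rewrite fx !inE => /orP[/eqP ji|/eqP jx]; last by apply: val_inj; rewrite fx eij jx.
by rewrite ji adjnn in ij.
Qed.

Lemma card_meeting e : #|meeting e| = 5.
Proof.
have [i [j [ij eij]]] := Edge_pair e.
have := cardsUI (edges_at i) (edges_at j).
rewrite -(meeting_pair eij) (edges_atI ij eij) cards1 !card_edges_at; lia.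
Qed.

Lemma card_edges_at_meeting a w : a \notin val w -> #|edges_at a :&: meeting w| <= 1.
Proof.
move=> aw; apply/card_le1_eqP => d d'; rewrite !inE => /andP[/edge_at[x [ax dx]] wd].
case/andP=> /edge_at[x' [ax' dx']] wd'.
have [p [q [pq wpq]]] := Edge_pair w.
move: wd wd'; rewrite meetsC (meetsE _ dx) meetsC (meetsE _ dx') (negbTE aw) /=.
have [xx' _ _|xx' wx wx'] := eqVneq x x'; first by apply: val_inj; rewrite dx dx' xx'.
have : adjn n x x'.
  move: wx wx' xx'; rewrite wpq !inE.
  by case/orP=> /eqP-> /orP[]/eqP->; rewrite ?eqxx // adjn_sym.
by move/(adjn_triangle ax ax').
Qed.

Lemma card_meetingI w1 w2 : ~~ meets w1 w2 -> #|meeting w1 :&: meeting w2| <= 2.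
Proof.
have [a [b [_ eab]]] := Edge_pair w1.
rewrite (meetsE _ eab) negb_or => /andP[aw2 bw2].
rewrite (meeting_pair eab) setIUl; apply: leq_trans (leq_card_setU _ _).1 _.
by rewrite -[2]/(1 + 1) leq_add ?card_edges_at_meeting.
Qed.

Lemma card_near w1 : #|[set w2 | near w1 w2]| <= 25.
Proof.
have -> : [set w2 | near w1 w2] = \bigcup_(u in meeting w1) meeting u.
  apply/setP => w2; rewrite inE; apply/existsP/bigcupP => [[u /andP[w1u uw2]]|[u]].
    by exists u; rewrite inE.
  by rewrite !inE => w1u uw2; exists u; rewrite w1u.
apply: leq_trans (card_big_setU _ _ _) _.
by rewrite (eq_bigr (fun _ => 5)) => [|u _]; rewrite ?sum_nat_const ?card_meeting.
Qed.

End Graph.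

Section SecondNeighbourhood.
Variable n : nat.
Implicit Types (s : {perm Edge n}) (w e d : Edge n).

Lemma mem_N2_Badj s w e :
  (inr e \in N2 (Badj s) (inr w)) = (e != w) && (meets w e || meets (s w) (s e)).
Proof.
rewrite inE; congr andb; apply/existsP/orP => [[[[v []]|f]] /andP[wv ve] |].
- by right; apply/set0Pn; exists v; rewrite inE; apply/andP.
- by left; apply/set0Pn; exists v; rewrite inE; apply/andP.
- by [].
by case=> /set0Pn[v]; rewrite inE => /andP[wv ve];
  [exists (inl (v, false)) | exists (inl (v, true))]; rewrite /= wv ve.
Qed.

Definition same_N2 w1 w2 : {set {perm Edge n}} :=
  [set s | N2 (Badj s) (inr w1) == N2 (Badj s) (inr w2)].

Definition forced w1 w2 : {set Edge n} := (meeting w1 :\: meeting w2) :\ w1.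

Lemma same_N2_meets s w1 w2 : w1 != w2 -> s \in same_N2 w1 w2 -> ~~ meets w1 w2.
Proof.
rewrite inE => w12 /eqP N2_12; apply/negP => m12.
have : inr w2 \in N2 (Badj s) (inr w1) by rewrite mem_N2_Badj eq_sym w12 m12.
by rewrite N2_12 mem_N2_Badj eqxx.
Qed.

Lemma same_N2_forced s w1 w2 d :
  s \in same_N2 w1 w2 -> d \in forced w1 w2 -> s d \in meeting (s w2).
Proof.
rewrite !inE => /eqP N2_12 /and3P[dw1 w2d w1d].
have : inr d \in N2 (Badj s) (inr w1) by rewrite mem_N2_Badj dw1 w1d.
by rewrite N2_12 mem_N2_Badj (negbTE w2d) => /andP[].
Qed.

Lemma w2_notin_forced w1 w2 : w2 \notin forced w1 w2.
Proof. by rewrite !inE meetss /= andbF. Qed.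

Hypothesis n_ge3 : 3 <= n.

Lemma card_forced_meeting w1 w2 :
  ~~ meets w1 w2 -> #|forced w1 w2| = 4 - #|meeting w1 :&: meeting w2|.
Proof.
move=> m12; have := cardsD1 w1 (meeting w1 :\: meeting w2).
rewrite !inE meetss meetsC (negbTE m12) [#|meeting w1 :\: _|]cardsD card_meeting //.
by rewrite /forced /= => h; rewrite -[4]/(5 - 1) subnAC h addKn.
Qed.

Lemma card_forced w1 w2 : ~~ meets w1 w2 -> 2 <= #|forced w1 w2|.
Proof.
by move=> m12; rewrite card_forced_meeting //; have := card_meetingI n_ge3 m12; lia.
Qed.

Lemma card_forced_far w1 w2 : ~~ near w1 w2 -> #|forced w1 w2| = 4.
Proof.
move=> far.
have m12 : ~~ meets w1 w2.
  by apply: contra far => meet12; apply/existsP; exists w1; rewrite meetss.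
rewrite card_forced_meeting // (_ : _ :&: _ = set0) ?cards0 //.
apply/setP => u; rewrite !inE; apply/negP => /andP[w1u w2u].
by move/existsP: far; apply; exists u; rewrite w1u meetsC.
Qed.

End SecondNeighbourhood.

Section BadPermutations.
Variable n : nat.
Hypothesis n_ge3 : 3 <= n.
Local Notation m := #|{: Edge n}|.
Implicit Types w : Edge n.

Local Notation bound_near := (m * (5 ^ 3 * (m - 3)`!)).
Local Notation bound_far := (m * (5 ^ 4 * (m - 4)`!)).

(* Split according to [y = s w2]: then [s] maps [w2] to [y] and each of [k] forced
   edges into [meeting y], which has 5 elements. *)
Lemma card_same_N2 k w1 w2 : k <= #|forced w1 w2| ->
  #|same_N2 w1 w2| <= m * (5 ^ k.+1 * (m - k.+1)`!).
Proof.
case/card_geqP => xs [xs_uniq xs_size xs_forced].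
set X := w2 |: [set x in xs].
have card_X : #|X| = k.+1.
  have /card_uniqP card_xs := xs_uniq.
  rewrite cardsU1 cardsE card_xs xs_size inE.
  by rewrite (contraNN (@xs_forced w2)) // w2_notin_forced.
pose A (y x : Edge n) := if x == w2 then [set y] else meeting y.
have sub : same_N2 w1 w2 \subset
           \bigcup_(y : Edge n) [set s : {perm Edge n} | [forall x in X, s x \in A y x]].
  apply/subsetP => s s_same; apply/bigcupP; exists (s w2) => //.
  rewrite inE; apply/forall_inP => x; rewrite /A !inE.
  case: eqP => [->|_] /=; first by rewrite inE.
  by move=> /xs_forced; apply: same_N2_forced.
apply: leq_trans (subset_leq_card sub) _; apply: leq_trans (card_big_setU _ _ _) _.
rewrite -card_X -sum_nat_constT; apply: leq_sum => y _.
by apply: card_perm_in_on => x _; rewrite /A; case: eqP => _; rewrite ?cards1 ?card_meeting.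
Qed.

Lemma card_same_N2_le w1 w2 : w1 != w2 ->
  #|same_N2 w1 w2| <= near w1 w2 * bound_near + bound_far.
Proof.
move=> w12; have [m12|m12] := boolP (meets w1 w2).
  rewrite (_ : same_N2 w1 w2 = set0) ?cards0 //; apply/setP => s; rewrite in_set0.
  by apply/negbTE; apply: contraL m12; apply: same_N2_meets.
have [nr|far] := boolP (near w1 w2).
  by rewrite mul1n; apply: leq_trans (leq_addr _ _); apply: card_same_N2; apply: card_forced.
by rewrite mul0n add0n; apply: card_same_N2; rewrite card_forced_far.
Qed.

Lemma card_bad_perm : #|[set s : {perm Edge n} | bad_perm s]| <=
  m * (25 * bound_near + m * bound_far).
Proof.
have -> : [set s | bad_perm s] = \bigcup_(w1 : Edge n) \bigcup_(w2 | w1 != w2) same_N2 w1 w2.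
  apply/setP => s; rewrite inE; apply/existsP/bigcupP.
    case=> w1 /existsP[w2 /andP[w12 same]]; exists w1 => //.
    by apply/bigcupP; exists w2; rewrite ?inE.
  case=> w1 _ /bigcupP[w2 w12]; rewrite inE => same.
  by exists w1; apply/existsP; exists w2; rewrite w12.
apply: leq_trans (card_big_setU _ _ _) _; rewrite -sum_nat_constT.
apply: leq_sum => w1 _; apply: leq_trans (card_big_setU _ _ _) _.
apply: (@leq_trans (\sum_(w2 : Edge n) (near w1 w2 * bound_near + bound_far))).
  by rewrite big_mkcond; apply: leq_sum => w2 _; case: ifP => // /card_same_N2_le.
rewrite big_split /= sum_nat_constT leq_add2r -big_distrl leq_mul2r; apply/orP; right.
apply: leq_trans (card_near n_ge3 w1); rewrite -sum_mem_card.
by apply/eq_leq/eq_bigr => w2 _; rewrite inE.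
Qed.

End BadPermutations.

Lemma expn_le_ffact m j : 2 * j <= m.+2 -> m ^ j <= 2 ^ j * m ^_ j.
Proof.
elim: j => [|j IHj] le_jm; first by rewrite ffactn0.
rewrite expnSr ffactnSr expnSr mulnACA.
by apply: leq_mul; [apply: IHj | ]; lia.
Qed.

Lemma expn_fact_le m j : j <= m -> 2 * j <= m.+2 -> m ^ j * (m - j)`! <= 2 ^ j * m`!.
Proof. by move=> jm le_jm; rewrite -(ffact_fact jm) mulnA leq_mul2r expn_le_ffact ?orbT. Qed.

Lemma bad_bound_le_fact m t : 6 <= m ->
  t <= m * (25 * (m * (5 ^ 3 * (m - 3)`!)) + m * (m * (5 ^ 4 * (m - 4)`!))) ->
  t * m <= 5 ^ 4 * 56 * m`!.
Proof.
move=> m_ge6 t_le.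
have f3 : m ^ 3 * (m - 3)`! <= 8 * m`! by apply: expn_fact_le; lia.
have f4 : m ^ 4 * (m - 4)`! <= 16 * m`! by apply: expn_fact_le; lia.
have : t * m <= 3125 * (m ^ 3 * (m - 3)`!) + 625 * (m ^ 4 * (m - 4)`!).
  apply: leq_trans (leq_mul t_le (leqnn m)) _; apply: eq_leq.
  rewrite !expnS expn0 muln1; ring.
lia.
Qed.

Lemma ler_ratio_nat (t f c k : nat) : 0 < k -> 0 < f -> t * k <= c * f ->
  (t%:R / f%:R <= c%:R / k%:R :> rat)%R.
Proof.
move=> k_gt0 f_gt0 le_tc.
rewrite ler_pdivrMr ?ltr0n // mulrAC ler_pdivlMr ?ltr0n //.
by rewrite -!natrM ler_nat.
Qed.

Theorem mainTheorem10 :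
  exists (C : rat) (N : nat), forall n : nat, (2 <= n)%N -> (N <= n)%N ->
    (prob_bad n <= C / n%:R)%R.
Proof.
exists (5 ^ 4 * 56)%:R%R, 3 => n _ n_ge3.
have m_ge6 : 6 <= #|{: Edge n}| by rewrite card_Edge //; lia.
have t_le := bad_bound_le_fact m_ge6 (card_bad_perm n_ge3).
rewrite /prob_bad card_permT; apply: ler_ratio_nat; rewrite ?fact_gt0 //; first lia.
by apply: leq_trans t_le; rewrite leq_mul2l card_Edge //; lia.
Qed.
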